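(* For all $\Sigma\subseteq\mathsf{FOR}$ and $\varphi\in\mathsf{FOR}$: $\Sigma\vdash_{\mathcal{F}SN}\varphi$ if and only if $\Sigma\vDash_{\mathsf{R}^{sn}}\varphi$, where $\mathsf{R}^{sn}$ is the set of Epstein relations $\mathfrak{R}$ that are symmetric and satisfy: for all $\varphi,\psi$, $\langle\neg\varphi,\psi\rangle\in\mathfrak{R}$ implies $\langle\varphi,\psi\rangle\in\mathfrak{R}$.
   Context: Language: propositional letters $\Phi=\{p_0,p_1,\dots\}$; connectives $\neg$, $\lor,\wedge,\to,\leftrightarrow,\vartriangle,\looparrowright$; $\mathsf{FOR}$ the set of all formulas. An Epstein model is $\langle v,\mathfrak{R}\rangle$ with $v:\Phi\to\{0,1\}$ and $\mathfrak{R}\subseteq\mathsf{FOR}^2$ (an Epstein relation); truth: letters via $v$, boolean connectives classical, $\langle v,\mathfrak{R}\rangle\vDash\varphi\vartriangle\psi$ iff both true and $\langle\varphi,\psi\rangle\in\mathfrak{R}$; $\langle v,\mathfrak{R}\rangle\vDash\varphi\looparrowright\psi$ iff $\varphi\to\psi$ true and $\langle\varphi,\psi\rangle\in\mathfrak{R}$. For a set $\mathsf{R}$ of relations, $\Sigma\vDash_{\mathsf{R}}\varphi$ iff for every $\mathfrak{R}\in\mathsf{R}$ and every valuation $v$, if $\langle v,\mathfrak{R}\rangle$ satisfies all of $\Sigma$ then it satisfies $\varphi$. $\mathcal{F}$ is the least set containing all classical tautologies of the language and the axioms $(p\looparrowright q)\to(p\to q)$ and $(p\vartriangle q)\leftrightarrow((p\looparrowright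 q)\wedge(p\wedge q))$, closed under uniform substitution and modus ponens. $\mathcal{F}SN$ is the least set containing $\mathcal{F}$ and the axioms ($p,q$ distinct letters) $(s)\ (p\looparrowright q)\to((q\looparrowright p)\lor\neg(q\to p))$; $(n1)\ (\neg p\looparrowright q)\to((p\looparrowright q)\lor\neg(p\to q))$; $(n2)\ ((\neg\neg p\looparrowright q)\wedge\neg(\neg p\to q))\to(p\looparrowright q)$; $(sn)\ (\neg(p\to q)\wedge(\neg p\looparrowright q))\to(q\looparrowright p)$; $(ns)\ (\neg(\neg p\to q)\wedge(q\looparrowright\neg p))\to(p\looparrowright q)$, closed under uniform substitution and modus ponens. $\Sigma\vdash_{\mathcal{F}SN}\varphi$ iff there is a finite sequence ending in $\varphi$ each member of which is in $\mathcal{F}SN\cup\Sigma$ or follows from two earlier members by modus ponens. *)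

From Stdlib Require Import Arith.

(* Formulas: propositional letters p_n and connectives
   neg, or, and, ->, <->, triangle (Tri), looparrowright (Rel). *)
Inductive form : Type :=
| Var  : nat -> form
| Neg  : form -> form
| Or   : form -> form -> form
| And  : form -> form -> form
| Impl : form -> form -> form
| Iff  : form -> form -> form
| Tri  : form -> form -> form
| Rel  : form -> form -> form.

(* Boolean evaluation where letters get values from [a] and the
   non-classical compounds Tri/Rel are treated as atoms, with arbitrary
   truth values given by [t] and [l]. *)
Fixpoint beval (a : nat -> bool) (t l : form -> form -> bool) (f : form) : bool :=
  match f with
  | Var n => a n
  | Neg f1 => negb (beval a t l f1)
  | Or f1 f2 => beval a t l f1 || beval a t l f2
  | And f1 f2 => beval a t l f1 && beval a t l f2
  | Impl f1 f2 => implb (beval a t l f1) (beval a t l f2)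
  | Iff f1 f2 => Bool.eqb (beval a t l f1) (beval a t l f2)
  | Tri f1 f2 => t f1 f2
  | Rel f1 f2 => l f1 f2
  end.

Definition tautology (f : form) : Prop :=
  forall (a : nat -> bool) (t l : form -> form -> bool), beval a t l f = true.

Fixpoint subst (s : nat -> form) (f : form) : form :=
  match f with
  | Var n => s n
  | Neg f1 => Neg (subst s f1)
  | Or f1 f2 => Or (subst s f1) (subst s f2)
  | And f1 f2 => And (subst s f1) (subst s f2)
  | Impl f1 f2 => Impl (subst s f1) (subst s f2)
  | Iff f1 f2 => Iff (subst s f1) (subst s f2)
  | Tri f1 f2 => Tri (subst s f1) (subst s f2)
  | Rel f1 f2 => Rel (subst s f1) (subst s f2)
  end.

Definition p : form := Var 0.
Definition q : form := Var 1.

Definition ax_rel : form := Impl (Rel p q) (Impl p q).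
Definition ax_tri : form := Iff (Tri p q) (And (Rel p q) (And p q)).

Definition ax_s : form := Impl (Rel p q) (Or (Rel q p) (Neg (Impl q p))).
Definition ax_n1 : form := Impl (Rel (Neg p) q) (Or (Rel p q) (Neg (Impl p q))).
Definition ax_n2 : form :=
  Impl (And (Rel (Neg (Neg p)) q) (Neg (Impl (Neg p) q))) (Rel p q).
Definition ax_sn : form := Impl (And (Neg (Impl p q)) (Rel (Neg p) q)) (Rel q p).
Definition ax_ns : form := Impl (And (Neg (Impl (Neg p) q)) (Rel q (Neg p))) (Rel p q).

Definition FSN_axiom (f : form) : Prop :=
  f = ax_rel \/ f = ax_tri \/ f = ax_s \/ f = ax_n1 \/ f = ax_n2 \/
  f = ax_sn \/ f = ax_ns.

Inductive FSN : form -> Prop :=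
| FSN_taut : forall f, tautology f -> FSN f
| FSN_ax : forall f, FSN_axiom f -> FSN f
| FSN_subst : forall s f, FSN f -> FSN (subst s f)
| FSN_mp : forall f g, FSN (Impl f g) -> FSN f -> FSN g.

(* Derivability from premises: the least set containing FSN and Sigma,
   closed under modus ponens (equivalent to existence of a finite
   derivation sequence). *)
Inductive derivable (Sigma : form -> Prop) : form -> Prop :=
| der_thm : forall f, FSN f -> derivable Sigma f
| der_hyp : forall f, Sigma f -> derivable Sigma f
| der_mp : forall f g, derivable Sigma (Impl f g) -> derivable Sigma f ->
    derivable Sigma g.

Fixpoint sat (v : nat -> bool) (R : form -> form -> Prop) (f : form) : Prop :=
  match f with
  | Var n => v n = true
  | Neg f1 => ~ sat v R f1
  | Or f1 f2 => sat v R f1 \/ sat v R f2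
  | And f1 f2 => sat v R f1 /\ sat v R f2
  | Impl f1 f2 => sat v R f1 -> sat v R f2
  | Iff f1 f2 => (sat v R f1 <-> sat v R f2)
  | Tri f1 f2 => (sat v R f1 /\ sat v R f2) /\ R f1 f2
  | Rel f1 f2 => (sat v R f1 -> sat v R f2) /\ R f1 f2
  end.

Definition sem_conseq (Rs : (form -> form -> Prop) -> Prop)
    (Sigma : form -> Prop) (f : form) : Prop :=
  forall R, Rs R -> forall v : nat -> bool,
    (forall g, Sigma g -> sat v R g) -> sat v R f.

Definition R_sn (R : form -> form -> Prop) : Prop :=
  (forall f g, R f g -> R g f) /\
  (forall f g, R (Neg f) g -> R f g).

(* Soundness is a check of the axioms against the semantics.  For
   completeness, extend a set Sigma not deriving phi to a maximal set Gam with
   the same property; Gam is deductively closed and decides every formula.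
   Relate x and y when Gam contains Rel x y as soon as it contains Impl x y,
   and Rel y x as soon as it contains Impl y x.  This relation is symmetric by
   construction, is closed under negating its first argument by the axioms
   (s), (n1), (sn), (ns), and makes the Epstein model read off from Gam
   satisfy exactly the members of Gam. *)
From Stdlib Require Import Lia Cantor Classical ClassicalEpsilon.

Definition bool_of (P : Prop) : bool :=
  if excluded_middle_informative P then true else false.

Lemma bool_of_true (P : Prop) : bool_of P = true <-> P.
Proof.
  unfold bool_of; destruct (excluded_middle_informative P); split;
    intuition discriminate.
Qed.

Ltac taut_tac := intros ? ? ?; simpl;
  repeat match goal with |- context [beval ?a ?t ?l ?x] => destruct (beval a t l x) end;
  reflexivity.

Lemma beval_sat v R f :
  beval v (fun a b => bool_of (sat v R (Tri a b)))
          (fun a b => bool_of (sat v R (Rel a b))) f = true <-> sat v R f.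
Proof.
  induction f; simpl.
  - tauto.
  - rewrite Bool.negb_true_iff, <- Bool.not_true_iff_false. tauto.
  - rewrite Bool.orb_true_iff. tauto.
  - rewrite Bool.andb_true_iff. tauto.
  - destruct (beval _ _ _ f1), (beval _ _ _ f2); simpl; intuition discriminate.
  - destruct (beval _ _ _ f1), (beval _ _ _ f2); simpl; intuition discriminate.
  - apply bool_of_true.
  - apply bool_of_true.
Qed.

Lemma tautology_sat v R f : tautology f -> sat v R f.
Proof. intros Hf; apply beval_sat, Hf. Qed.

Lemma sat_subst s v R f :
  sat v R (subst s f) <->
  sat (fun n => bool_of (sat v R (s n))) (fun a b => R (subst s a) (subst s b)) f.
Proof. induction f; simpl; try tauto. rewrite bool_of_true; tauto. Qed.

Lemma R_sn_subst s R : R_sn R -> R_sn (fun a b => R (subst s a) (subst s b)).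
Proof. intros [Hsym Hneg]; split; intros a b; [apply Hsym | apply Hneg]. Qed.

Lemma FSN_axiom_sat v R f : R_sn R -> FSN_axiom f -> sat v R f.
Proof.
  intros [Hsym Hneg].
  destruct 1 as [->|[->|[->|[->|[->|[->| ->]]]]]]; simpl; unfold p, q; simpl.
  - tauto.
  - tauto.
  - intros [_ Hr]. destruct (classic (v 1 = true -> v 0 = true)); auto.
  - intros [_ Hr]. destruct (classic (v 0 = true -> v 1 = true)); auto.
  - intros [[_ Hr] Hn]. split; [tauto | apply Hneg, Hneg, Hr].
  - intros [Hn [_ Hr]]. split; [tauto | apply Hsym, Hneg, Hr].
  - intros [Hn [_ Hr]]. split; [tauto | apply Hneg, Hsym, Hr].
Qed.

Lemma FSN_sat f : FSN f -> forall R, R_sn R -> forall v, sat v R f.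
Proof.
  induction 1 as [f Hf | f Hf | s f _ IH | f g _ IHfg _ IHf]; intros R HR v.
  - now apply tautology_sat.
  - now apply FSN_axiom_sat.
  - apply sat_subst, IH, R_sn_subst, HR.
  - exact (IHfg R HR v (IHf R HR v)).
Qed.

Lemma derivable_sound Sigma phi : derivable Sigma phi -> sem_conseq R_sn Sigma phi.
Proof.
  induction 1 as [f Hf | f Hf | f g _ IHfg _ IHf]; intros R HR v Hv.
  - now apply FSN_sat.
  - now apply Hv.
  - exact (IHfg R HR v Hv (IHf R HR v Hv)).
Qed.

Lemma derivable_mono (S T : form -> Prop) f :
  (forall x, S x -> T x) -> derivable S f -> derivable T f.
Proof.
  intros HST; induction 1.
  - now apply der_thm.
  - now apply der_hyp, HST.
  - eapply der_mp; eauto.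
Qed.

Lemma derivable_taut S f : tautology f -> derivable S f.
Proof. intros; now apply der_thm, FSN_taut. Qed.

Lemma deduction S x g :
  derivable (fun y => S y \/ y = x) g -> derivable S (Impl x g).
Proof.
  induction 1 as [f Hf | f [Hf | ->] | f g _ IHfg _ IHf].
  - eapply der_mp; [apply derivable_taut | exact (der_thm _ _ Hf)]. taut_tac.
  - eapply der_mp; [apply derivable_taut | exact (der_hyp _ _ Hf)]. taut_tac.
  - apply derivable_taut; taut_tac.
  - eapply der_mp; [eapply der_mp; [|exact IHfg] | exact IHf].
    apply derivable_taut; taut_tac.
Qed.

Fixpoint enc (f : form) : nat :=
  match f with
  | Var n => to_nat (0, n)
  | Neg a => to_nat (1, enc a)
  | Or a b => to_nat (2, to_nat (enc a, enc b))
  | And a b => to_nat (3, to_nat (enc a, enc b))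
  | Impl a b => to_nat (4, to_nat (enc a, enc b))
  | Iff a b => to_nat (5, to_nat (enc a, enc b))
  | Tri a b => to_nat (6, to_nat (enc a, enc b))
  | Rel a b => to_nat (7, to_nat (enc a, enc b))
  end.

Lemma to_nat_inj k a k' a' : to_nat (k, a) = to_nat (k', a') -> k = k' /\ a = a'.
Proof.
  intros H. apply (f_equal of_nat) in H. rewrite !cancel_of_to in H.
  now injection H.
Qed.

Lemma enc_inj f g : enc f = enc g -> f = g.
Proof.
  revert g; induction f; destruct g; cbn [enc]; intros H;
  apply to_nat_inj in H as [Hk H]; try discriminate;
  try (f_equal; auto; fail);
  apply to_nat_inj in H as [H1 H2]; f_equal; auto.
Qed.

Section Lindenbaum.
Variable Sigma : form -> Prop.
Variable phi : form.
Hypothesis Sigma_nder : ~ derivable Sigma phi.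

Fixpoint chain (n : nat) : form -> Prop :=
  match n with
  | 0 => Sigma
  | S n => fun x => chain n x \/
      (enc x = n /\ ~ derivable (fun y => chain n y \/ y = x) phi)
  end.

Definition limit (x : form) : Prop := exists n, chain n x.

Lemma chain_mono n m x : n <= m -> chain n x -> chain m x.
Proof. induction 1; simpl; auto. Qed.

Lemma chain_nder n : ~ derivable (chain n) phi.
Proof.
  induction n as [|n IH]; simpl; auto.
  destruct (classic (exists x, enc x = n /\ ~ derivable (fun y => chain n y \/ y = x) phi))
    as [[x [Ex Dx]] | Hno]; intro D.
  - apply Dx. eapply derivable_mono; [|exact D].
    intros y [Hy | [Ey _]]; auto. right. apply enc_inj. congruence.
  - apply IH. eapply derivable_mono; [|exact D].
    intros y [Hy | [Ey Dy]]; auto. exfalso; eauto.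
Qed.

Lemma derivable_limit_chain S f : derivable S f -> (forall x, S x -> limit x) ->
  exists n, derivable (chain n) f.
Proof.
  induction 1 as [f Hf | f Hf | f g _ IHfg _ IHf]; intros HS.
  - exists 0; now apply der_thm.
  - destruct (HS f Hf) as [n Hn]. exists n; now apply der_hyp.
  - destruct (IHfg HS) as [n1 D1], (IHf HS) as [n2 D2].
    exists (max n1 n2). eapply der_mp.
    + eapply derivable_mono; [|exact D1]. intros; eapply chain_mono; [|eauto]; lia.
    + eapply derivable_mono; [|exact D2]. intros; eapply chain_mono; [|eauto]; lia.
Qed.

Lemma limit_nder : ~ derivable limit phi.
Proof.
  intro D. destruct (derivable_limit_chain _ _ D (fun x H => H)) as [n Dn].
  exact (chain_nder n Dn).
Qed.

Lemma limit_maximal x : ~ derivable (fun y => limit y \/ y = x) phi -> limit x.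
Proof.
  intro H. exists (S (enc x)). simpl. right. split; auto.
  intro D; apply H. eapply derivable_mono; [|exact D].
  intros y [Hy | Hy]; [left; now exists (enc x) | auto].
Qed.

Lemma limit_closed x : derivable limit x -> limit x.
Proof.
  intros D. apply NNPP; intro Hx. apply limit_nder.
  eapply der_mp; [apply deduction | exact D].
  apply NNPP; intro; apply Hx, limit_maximal; auto.
Qed.

Lemma limit_neg x : limit (Neg x) <-> ~ limit x.
Proof.
  split.
  - intros Hn Hx. apply limit_nder.
    eapply der_mp; [eapply der_mp; [|apply der_hyp; exact Hn] | apply der_hyp; exact Hx].
    apply derivable_taut; taut_tac.
  - intros Hx. apply NNPP; intro Hn. apply limit_nder.
    assert (D1 : derivable (fun y => limit y \/ y = x) phi)
      by (apply NNPP; intro; apply Hx, limit_maximal; auto).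
    assert (D2 : derivable (fun y => limit y \/ y = Neg x) phi)
      by (apply NNPP; intro; apply Hn, limit_maximal; auto).
    apply deduction in D1, D2.
    eapply der_mp; [eapply der_mp; [|exact D2] | exact D1].
    apply derivable_taut; taut_tac.
Qed.

End Lindenbaum.

Lemma lindenbaum Sigma phi : ~ derivable Sigma phi ->
  exists Gam : form -> Prop,
    (forall x, Sigma x -> Gam x) /\ ~ Gam phi /\
    (forall x, derivable Gam x -> Gam x) /\ (forall x, Gam (Neg x) <-> ~ Gam x).
Proof.
  intros Hnd. exists (limit Sigma phi). repeat split.
  - intros x Hx; now exists 0.
  - intros Hphi; now apply (limit_nder Sigma phi Hnd), der_hyp.
  - apply limit_closed, Hnd.
  - now apply limit_neg.
  - now apply limit_neg.
Qed.

Section CanonicalModel.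
Variable Gam : form -> Prop.
Hypothesis Gam_closed : forall x, derivable Gam x -> Gam x.
Hypothesis Gam_neg : forall x, Gam (Neg x) <-> ~ Gam x.

Lemma Gam_thm x : FSN x -> Gam x.
Proof. intros; now apply Gam_closed, der_thm. Qed.

Lemma Gam_mp x y : Gam (Impl x y) -> Gam x -> Gam y.
Proof. intros; apply Gam_closed; eapply der_mp; apply der_hyp; eauto. Qed.

Lemma Gam_taut1 x y : tautology (Impl x y) -> Gam x -> Gam y.
Proof. intros; eapply Gam_mp; eauto. now apply Gam_thm, FSN_taut. Qed.

Lemma Gam_taut2 x y z : tautology (Impl x (Impl y z)) -> Gam x -> Gam y -> Gam z.
Proof. intros; eapply Gam_mp; eauto. eapply Gam_taut1; eauto. Qed.

Lemma Gam_and x y : Gam (And x y) <-> Gam x /\ Gam y.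
Proof.
  split.
  - intro H; split; (eapply Gam_taut1; [|exact H]); taut_tac.
  - intros [H1 H2]; eapply Gam_taut2; [|exact H1|exact H2]; taut_tac.
Qed.

Lemma Gam_or x y : Gam (Or x y) <-> Gam x \/ Gam y.
Proof.
  split.
  - intro H. destruct (classic (Gam x)) as [Hx|Hx]; auto. right.
    apply Gam_neg in Hx. eapply Gam_taut2; [|exact H|exact Hx]; taut_tac.
  - intros [H|H]; (eapply Gam_taut1; [|exact H]); taut_tac.
Qed.

Lemma Gam_impl x y : Gam (Impl x y) <-> (Gam x -> Gam y).
Proof.
  split; [intros; eapply Gam_mp; eauto|].
  intros H. destruct (classic (Gam x)) as [Hx|Hx].
  - eapply Gam_taut1; [|apply H, Hx]; taut_tac.
  - apply Gam_neg in Hx. eapply Gam_taut1; [|exact Hx]; taut_tac.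
Qed.

Lemma Gam_iff x y : Gam (Iff x y) <-> (Gam x <-> Gam y).
Proof.
  split.
  - intros H; split; intros H0; (eapply Gam_taut2; [|exact H|exact H0]); taut_tac.
  - intros H. destruct (classic (Gam x)) as [Hx|Hx].
    + eapply Gam_taut2; [|exact Hx|exact (proj1 H Hx)]; taut_tac.
    + assert (Hy : ~ Gam y) by tauto.
      apply Gam_neg in Hx, Hy. eapply Gam_taut2; [|exact Hx|exact Hy]; taut_tac.
Qed.

Definition subst2 (x y : form) : nat -> form :=
  fun n => match n with 0 => x | 1 => y | _ => Var n end.

Lemma Gam_axiom A x y : FSN_axiom A -> Gam (subst (subst2 x y) A).
Proof. intros; now apply Gam_thm, FSN_subst, FSN_ax. Qed.

Ltac instantiate_axiom ax x y :=
  let A := fresh "A" in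
  pose proof (Gam_axiom ax x y ltac:(unfold FSN_axiom; tauto)) as A; simpl in A;
  rewrite ?Gam_impl, ?Gam_iff, ?Gam_and, ?Gam_or, ?Gam_neg, ?Gam_impl in A.

Lemma Gam_rel_impl x y : Gam (Rel x y) -> Gam (Impl x y).
Proof. instantiate_axiom ax_rel x y. rewrite Gam_impl. exact A. Qed.

Lemma Gam_tri x y : Gam (Tri x y) <-> Gam (Rel x y) /\ Gam x /\ Gam y.
Proof. instantiate_axiom ax_tri x y. exact A. Qed.

Lemma Gam_rel_sym x y : Gam (Rel x y) -> Gam (Impl y x) -> Gam (Rel y x).
Proof. instantiate_axiom ax_s x y. rewrite Gam_impl. tauto. Qed.

Lemma Gam_rel_negl x y : Gam (Rel (Neg x) y) -> Gam (Impl x y) -> Gam (Rel x y).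
Proof. instantiate_axiom ax_n1 x y. rewrite Gam_impl. tauto. Qed.

Lemma Gam_rel_negl_swap x y :
  Gam x -> ~ Gam y -> Gam (Rel (Neg x) y) -> Gam (Rel y x).
Proof. instantiate_axiom ax_sn x y. tauto. Qed.

Lemma Gam_rel_negr_swap x y :
  ~ Gam x -> ~ Gam y -> Gam (Rel y (Neg x)) -> Gam (Rel x y).
Proof. instantiate_axiom ax_ns x y. rewrite Gam_neg in A. tauto. Qed.

Definition canon_rel (x y : form) : Prop :=
  (Gam (Impl x y) -> Gam (Rel x y)) /\ (Gam (Impl y x) -> Gam (Rel y x)).

Lemma canon_rel_of_Gam x y : Gam (Rel x y) -> canon_rel x y.
Proof. intros H; split; intros; auto. now apply Gam_rel_sym. Qed.

Lemma canon_rel_negl x y : canon_rel (Neg x) y -> canon_rel x y.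
Proof.
  unfold canon_rel; rewrite !Gam_impl, !Gam_neg. intros [H1 H2].
  destruct (classic (Gam x)) as [Hx|Hx]; destruct (classic (Gam y)) as [Hy|Hy].
  - assert (Rxy : Gam (Rel x y))
      by (apply Gam_rel_negl; [apply H1; tauto | apply Gam_impl; tauto]).
    split; intros; auto. apply Gam_rel_sym; auto. apply Gam_impl; tauto.
  - split; intros; [tauto|]. apply Gam_rel_negl_swap; auto. apply H1; tauto.
  - split; intros; [|tauto].
    apply Gam_rel_negl; [apply H1; tauto | apply Gam_impl; tauto].
  - assert (Rxy : Gam (Rel x y)) by (apply Gam_rel_negr_swap; auto; apply H2; tauto).
    split; intros; auto. apply Gam_rel_sym; auto. apply Gam_impl; tauto.
Qed.

Lemma canon_rel_R_sn : R_sn canon_rel.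
Proof. split; [intros f g [H1 H2]; now split | exact canon_rel_negl]. Qed.

Definition canon_val (n : nat) : bool := bool_of (Gam (Var n)).

Lemma truth_lemma f : sat canon_val canon_rel f <-> Gam f.
Proof.
  induction f as [n | f IH | f1 IH1 f2 IH2 | f1 IH1 f2 IH2 | f1 IH1 f2 IH2
                  | f1 IH1 f2 IH2 | f1 IH1 f2 IH2 | f1 IH1 f2 IH2]; simpl.
  - apply bool_of_true.
  - rewrite Gam_neg; tauto.
  - rewrite Gam_or; tauto.
  - rewrite Gam_and; tauto.
  - rewrite Gam_impl; tauto.
  - rewrite Gam_iff; tauto.
  - rewrite Gam_tri, IH1, IH2. split.
    + intros [[H1 H2] [H3 _]]. repeat split; auto. apply H3, Gam_impl; auto.
    + intros [H1 [H2 H3]]. split; auto. now apply canon_rel_of_Gam.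
  - rewrite IH1, IH2, <- Gam_impl. split.
    + intros [H1 [H2 _]]. auto.
    + intros H; split; [now apply Gam_rel_impl | now apply canon_rel_of_Gam].
Qed.

End CanonicalModel.

Theorem mainTheorem18 :
  forall (Sigma : form -> Prop) (phi : form),
    derivable Sigma phi <-> sem_conseq R_sn Sigma phi.
Proof.
  intros Sigma phi; split; [apply derivable_sound|].
  intros Hsem. apply NNPP; intros Hnd.
  destruct (lindenbaum Sigma phi Hnd) as (Gam & HSigma & Hphi & Hclosed & Hneg).
  apply Hphi, (truth_lemma Gam Hclosed Hneg).
  apply Hsem; [apply canon_rel_R_sn; auto |].
  intros g Hg. apply (truth_lemma Gam Hclosed Hneg), HSigma, Hg.
Qed.
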